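(* Let $m\ge 2$ and let $n_1,\dots,n_m\ge 4$ be even. Then the strong metric dimension of the even chain cycle satisfies $$sdim(\mathcal{C}(C_{n_1},\dots,C_{n_m}))=1+\sum_{i=1}^{m}\frac{n_i-2}{2}.$$
   Context: Let $C_{n_1},\dots,C_{n_m}$ be pairwise disjoint cycles, $V(C_{n_i})=\{v^i_1,\dots,v^i_{n_i}\}$ with $v^i_j$ adjacent to $v^i_{j+1}$ (indices mod $n_i$). The even chain cycle (all $n_i$ even) is obtained by identifying $v^i_{n_i/2+1}$ with $v^{i+1}_1$ for $i=1,\dots,m-1$. A vertex $w$ strongly resolves distinct vertices $u,v$ if $u$ lies on some shortest $v$–$w$ path or $v$ lies on some shortest $u$–$w$ path. A set $W\subseteq V(G)$ is a strong resolving set if every pair of distinct vertices is strongly resolved by some $w\in W$; $sdim(G)$ is the minimum size of a strong resolving set. *)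

From mathcomp Require Import all_boot.
Set Implicit Arguments. Unset Strict Implicit. Unset Printing Implicit Defensive.

Section Graph.
Variables (V : finType) (e : rel V).

Definition walk (v w : V) (p : seq V) : bool := path e v p && (last v p == w).

Definition shortest_path (v w : V) (p : seq V) : Prop :=
  walk v w p /\ forall q, walk v w q -> size p <= size q.

Definition on_some_geodesic (v w u : V) : Prop :=
  exists p, shortest_path v w p /\ u \in v :: p.

Definition strongly_resolves (w u v : V) : Prop :=
  on_some_geodesic v w u \/ on_some_geodesic u w v.

Definition strong_resolving_set (W : {set V}) : Prop :=
  forall u v : V, u != v -> exists2 w, w \in W & strongly_resolves w u v.

Definition is_sdim (k : nat) : Prop :=
  (exists W : {set V}, strong_resolving_set W /\ #|W| = k) /\
  (forall W : {set V}, strong_resolving_set W -> k <= #|W|).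
End Graph.

(* Cycles are indexed i = 0..m-1 (paper's i+1), vertices j = 0..n_i-1 (paper's v^{i+1}_{j+1});
   cycle i has n i vertices, j adjacent to (j+1) mod n i. *)
Definition chain_raw (m : nat) (n : nat -> nat) := {i : 'I_m & 'I_(n (val i))}.

Definition raw_code m n (x : chain_raw m n) : nat * nat := (val (tag x), val (tagged x)).

(* the identification v^i_{n_i/2+1} = v^{i+1}_1: vertex (i,0), i >= 1, is identified with
   (i-1, n_(i-1)/2); name i j is the representative of vertex (i,j) *)
Definition chain_name (n : nat -> nat) (i j : nat) : nat * nat :=
  if (0 < i) && (j == 0) then (i.-1, (n i.-1)./2) else (i, j).

Definition chain_keep m n (x : chain_raw m n) : bool :=
  (val (tag x) == 0) || (val (tagged x) != 0).

Definition chain_vertex (m : nat) (n : nat -> nat) := {x : chain_raw m n | chain_keep x}.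

Definition chain_edge m n : rel (chain_vertex m n) := fun x y =>
  [exists i : 'I_m, exists j : 'I_(n (val i)),
     ((chain_name n i j == raw_code (val x)) &&
      (chain_name n i ((j + 1) %% n i) == raw_code (val y)))
  || ((chain_name n i j == raw_code (val y)) &&
      (chain_name n i ((j + 1) %% n i) == raw_code (val x)))].

From mathcomp Require Import all_boot zify.
Set Implicit Arguments. Unset Strict Implicit. Unset Printing Implicit Defensive.

(* The proof uses the characterisation of strong resolving sets through
   mutually maximally distant (MMD) pairs.  It is developed first for an abstract
   graph with a function [d] such that d x x = 0, d changes by at most one along
   an edge, and from x != y some edge leads one step closer to y; such a [d] is
   the graph distance and geodesics are the equality cases of the triangle
   inequality.  Then an MMD pair is strongly resolved only by its own ends, and
   a set meeting every MMD pair is strong resolving.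

   On the chain, vertex v^(i+1)_(j+1) is coded (i, j); cycle k is entered at
   position 0 and left at its antipode n_k/2, and the distance is the sum over k
   of the cycle distances between the projections onto cycle k.  A vertex is
   maximally distant from y iff it is antipodal, in every cycle containing it, to
   the projection of y.  Hence the set of v^1_1 and of the positions 0 < q < n_i/2
   of every cycle meets all MMD pairs, while the 1 + sum (n_i/2 - 1) pairs formed
   by these vertices and their antipodes are disjoint MMD pairs. *)

Section GeodesicDistance.
Variables (V : finType) (e : rel V) (d : V -> V -> nat).

Hypothesis d_refl : forall x, d x x = 0.
Hypothesis d_edge : forall x y z, e x y -> d x z <= (d y z).+1.
Hypothesis d_descent : forall x y, x != y -> exists2 x', e x x' & (d x' y).+1 = d x y.

Lemma dist_le_walk p x y : walk e x y p -> d x y <= size p.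
Proof.
elim: p x => [|z p IH] x; rewrite /walk /=; first by move=> /eqP ->; rewrite d_refl.
move=> /andP[/andP[exz pz] lz].
apply: leq_trans (d_edge y exz) _; apply: IH.
by rewrite /walk pz lz.
Qed.

(* Following descent steps yields a walk of length exactly [d x y]. *)
Lemma walk_of_dist x y : exists p, walk e x y p /\ size p = d x y.
Proof.
have [k] := ubnP (d x y); elim: k x => [|k IH] x // dxy.
have [<-|nxy] := eqVneq x y; first by exists [::]; rewrite /walk eqxx d_refl.
have [x' exx' dx'] := d_descent nxy.
have [|p [wp sp]] := IH x'; first by lia.
by exists (x' :: p); rewrite /walk /= exx' sp dx'.
Qed.

Lemma walk_cat x y z p q : walk e x y p -> walk e y z q -> walk e x z (p ++ q).
Proof. by rewrite /walk cat_path last_cat => /andP[-> /eqP ->] /andP[-> ->]. Qed.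

(* [d] is the graph distance, hence satisfies the triangle inequality. *)
Lemma dist_triangle x y z : d x z <= d x y + d y z.
Proof.
have [p [wp <-]] := walk_of_dist x y; have [q [wq <-]] := walk_of_dist y z.
by rewrite -size_cat; apply/dist_le_walk/(walk_cat wp wq).
Qed.

Lemma walk_split v w u p : walk e v w p -> u \in p ->
  exists p1 p2, [/\ walk e v u p1, walk e u w p2 & size p = size p1 + size p2].
Proof.
move=> wp up; case/splitPr: up wp => p1 p2 wp; exists (rcons p1 u), p2.
move: wp; rewrite /walk cat_path rcons_path last_rcons last_cat /= eqxx.
case/andP=> /andP[-> /andP[-> ->]] ->.
by rewrite size_cat size_rcons addSnnS.
Qed.

Lemma on_geodesicP v w u : on_some_geodesic e v w u <-> d v u + d u w = d v w.
Proof.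
split.
  move=> [p [[wp minp] up]].
  have [q [wq sq]] := walk_of_dist v w.
  have sp := minp q wq; rewrite sq in sp.
  apply/eqP; rewrite eqn_leq dist_triangle andbT.
  move: up; rewrite in_cons => /orP[/eqP ->|up]; first by rewrite d_refl.
  have [p1 [p2 [w1 w2 sE]]] := walk_split wp up.
  by rewrite sE in sp; apply: leq_trans sp; apply: leq_add; apply: dist_le_walk.
move=> duw.
have [p [wp sp]] := walk_of_dist v u; have [q [wq sq]] := walk_of_dist u w.
exists (p ++ q); split; first split.
- exact: walk_cat wp wq.
- by move=> r wr; rewrite size_cat sp sq duw; apply: dist_le_walk.
- case/andP: wp => _ /eqP <-; have := mem_last v p.
  by rewrite !in_cons mem_cat => /orP[->|->] //; rewrite orbT.
Qed.

Lemma dist_eq0 x y : d x y = 0 -> x = y.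
Proof.
move=> dxy; apply/eqP; apply: contraT => nxy.
by have [x' _] := d_descent nxy; rewrite dxy.
Qed.

Definition maximally_distant (a b : V) : Prop :=
  forall a', e a a' -> d b a' <= d b a.

(* A mutually maximally distant pair is strongly resolved only by its ends:
   a geodesic from [b] through [a] cannot be prolonged past [a]. *)
Lemma mmd_resolvers a b w : maximally_distant a b -> maximally_distant b a ->
  strongly_resolves e w a b -> w = a \/ w = b.
Proof.
move=> mab mba [] /on_geodesicP geo; [left | right]; apply/eqP; apply: contraT.
  rewrite eq_sym => /d_descent[a' ea da'].
  by have := mab _ ea; have := dist_triangle b a' w; lia.
rewrite eq_sym => /d_descent[b' eb db'].
by have := mba _ eb; have := dist_triangle a b' w; lia.
Qed.

(* For the upper bound the graph is undirected and [d] symmetric. *)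
Hypothesis e_sym : forall x y, e x y -> e y x.
Hypothesis d_sym : forall x y, d x y = d y x.

Lemma d_edge_r x y z : e x y -> d z y <= (d z x).+1.
Proof. by move=> exy; rewrite d_sym (d_sym z); apply/d_edge/e_sym. Qed.

(* A geodesic from [v] through [u] can be prolonged until it reaches a vertex
   maximally distant from [v]: take the farthest such endpoint. *)
Lemma geodesic_extension v u :
  exists2 z, d v u + d u z = d v z & maximally_distant z v.
Proof.
pose S := [pred z | d v u + d u z == d v z].
have Su : S u by rewrite inE d_refl addn0.
case: (arg_maxnP (d v) Su) => z /eqP Sz zmax; exists z => // z' ezz'.
rewrite leqNgt; apply/negP => gt.
have := d_edge_r v ezz'; have := d_edge_r u ezz'; have := dist_triangle v u z'.
have : S z' -> d v z' <= d v z by apply: zmax.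
by rewrite inE; lia.
Qed.

Lemma maximally_distant_beyond z v y :
  maximally_distant z v -> d z v + d v y = d z y -> maximally_distant z y.
Proof.
move=> mzv zvy z' ezz'; have := mzv _ ezz'; have := dist_triangle y v z'.
by rewrite (d_sym y z) (d_sym y v) (d_sym z v) in zvy *; lia.
Qed.

(* For [u != v] extend a geodesic
   [v..u..z] and then [z..v..y]; [z, y] is such a pair and each end resolves [u, v]. *)
Lemma strong_resolving_of_mmd (W : {set V}) :
  (forall a b, a != b -> maximally_distant a b -> maximally_distant b a ->
     (a \in W) || (b \in W)) ->
  strong_resolving_set e W.
Proof.
move=> cover u v nuv.
have [z vuz mzv] := geodesic_extension v u.
have [y zvy myz] := geodesic_extension z v.
have mzy := maximally_distant_beyond mzv zvy.
have nzy : z != y.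
  apply: contra_neq nuv => zy; apply/esym/dist_eq0.
  by move: zvy vuz; rewrite zy d_refl (d_sym y v); lia.
case/orP: (cover z y nzy mzy myz) => inW; [exists z | exists y] => //.
  by left; apply/on_geodesicP.
right; apply/on_geodesicP.
have := dist_triangle z u y; have := dist_triangle u v y.
by rewrite (d_sym z v) (d_sym z u) (d_sym u v) in zvy vuz *; lia.
Qed.

End GeodesicDistance.

Section CycleDistance.
Variables (N h : nat).

Definition cycle_dist (a b : nat) : nat :=
  minn ((a - b) + (b - a)) (N - ((a - b) + (b - a))).
Definition cnext (j : nat) : nat := if j.+1 < N then j.+1 else 0.
Definition cprev (j : nat) : nat := if j == 0 then N.-1 else j.-1.

Lemma cnext_mod j : j < N -> (j + 1) %% N = cnext j.
Proof.
move=> jN; rewrite /cnext; case: ifP => jN'; first by rewrite modn_small addn1.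
have -> : j + 1 = N by lia.
by rewrite modnn.
Qed.

Lemma cnext_lt j : j < N -> cnext j < N.
Proof. by rewrite /cnext; case: ifP; lia. Qed.

Lemma cprev_lt j : j < N -> cprev j < N.
Proof. by rewrite /cprev; case: ifP; lia. Qed.

Lemma cprevK j : j < N -> cnext (cprev j) = j.
Proof. by rewrite /cnext /cprev; case: ifP => /eqP; case: ifP; lia. Qed.

Lemma cycle_dist_sym a b : cycle_dist a b = cycle_dist b a.
Proof. by rewrite /cycle_dist; lia. Qed.

Lemma cycle_dist_eq0 a b : a < N -> b < N -> cycle_dist a b = 0 -> a = b.
Proof. by rewrite /cycle_dist; lia. Qed.

Lemma cycle_dist_next t j : t < N -> j < N ->
  cycle_dist t (cnext j) <= (cycle_dist t j).+1 /\
  cycle_dist t j <= (cycle_dist t (cnext j)).+1.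
Proof. by rewrite /cycle_dist /cnext; case: ifP; lia. Qed.

Hypothesis N_even : N = h.*2.

Lemma cycle_dist_le_half a b : a < N -> b < N -> cycle_dist a b <= h.
Proof. by rewrite /cycle_dist; lia. Qed.

Lemma cycle_dist_of_antipodal a b : a = b + h \/ b = a + h -> cycle_dist a b = h.
Proof. by rewrite /cycle_dist; lia. Qed.

Lemma cycle_dist_antipodal a b : a < N -> b < N ->
  cycle_dist a b = h -> a = b + h \/ b = a + h.
Proof. by rewrite /cycle_dist; lia. Qed.

Lemma cycle_dist_up t j : t < N -> j < N -> cycle_dist t j < h ->
  exists2 j', j' = cnext j \/ j' = cprev j & cycle_dist t j' = (cycle_dist t j).+1.
Proof.
move=> tN jN lt; rewrite /cycle_dist in lt *.
case: (leqP t j) => tj; [case: (ltngtP (j - t) h) | case: (ltngtP (t - j) h)] => dh;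
  try by [exfalso; lia].
- by exists (cnext j); [left | rewrite /cnext; case: ifP; lia].
- by exists (cprev j); [right | rewrite /cprev; case: ifP; lia].
- by exists (cprev j); [right | rewrite /cprev; case: ifP; lia].
- by exists (cnext j); [left | rewrite /cnext; case: ifP; lia].
Qed.

Lemma cycle_dist_down t j : t < N -> j < N -> 0 < cycle_dist t j ->
  exists2 j', j' = cnext j \/ j' = cprev j & (cycle_dist t j').+1 = cycle_dist t j.
Proof.
move=> tN jN pos; rewrite /cycle_dist in pos *.
case: (leqP t j) => tj; [case: (leqP (j - t) h) | case: (leqP (t - j) h)] => dh.
- by exists (cprev j); [right | rewrite /cprev; case: ifP; lia].
- by exists (cnext j); [left | rewrite /cnext; case: ifP; lia].
- by exists (cnext j); [left | rewrite /cnext; case: ifP; lia].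
- by exists (cprev j); [right | rewrite /cprev; case: ifP; lia].
Qed.

End CycleDistance.

Lemma sum_swap_term (I : finType) (F G : I -> nat) (i0 : I) :
  (forall i, i != i0 -> F i = G i) -> \sum_i F i + G i0 = \sum_i G i + F i0.
Proof.
move=> FG; rewrite [in LHS](bigD1 i0) // [in RHS](bigD1 i0) //= (eq_bigr _ FG).
by rewrite addnAC [RHS]addnAC [F i0 + _]addnC.
Qed.

Lemma card_ge_of_disjoint_hits (T : finType) (A : eqType) (s : seq A) (W : {set T})
    (P : A -> T -> bool) :
  uniq s -> (forall c, c \in s -> exists2 w, w \in W & P c w) ->
  {in s &, forall c1 c2 w, P c1 w -> P c2 w -> c1 = c2} -> size s <= #|W|.
Proof.
case: s => [|c0 s] // us hit disj.
have [x0 _ _] := hit c0 (mem_head _ _).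
pose g c := odflt x0 [pick w in W | P c w].
have gP c : c \in c0 :: s -> g c \in W /\ P c (g c).
  move=> cs; rewrite /g; case: pickP => [w /andP[] // | none].
  by have [w wW Pw] := hit c cs; move: (none w); rewrite wW Pw.
have ginj : {in c0 :: s &, injective g}.
  move=> c1 c2 h1 h2 gE; have [_ g1] := gP _ h1; have [_ g2] := gP _ h2.
  by apply: (disj c1 c2 h1 h2 (g c1)); rewrite // gE.
rewrite cardE -(size_map g); apply: uniq_leq_size; first by rewrite map_inj_in_uniq.
by move=> w /mapP[c cs ->]; rewrite mem_enum; have [] := gP c cs.
Qed.

Section EvenChainCycle.
Variables (m : nat) (n : nat -> nat).

Local Notation vertex := (chain_vertex m n).
Local Notation edge := (@chain_edge m n).
Local Notation code x := (raw_code (val x)).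
Local Notation half i := (n i)./2.

Lemma code_bound (x : vertex) :
  [/\ (code x).1 < m, (code x).2 < n (code x).1 & ((code x).1 == 0) || ((code x).2 != 0)].
Proof. by case: x => [[i p] kp]; split => //=; apply: ltn_ord. Qed.

Lemma code_inj (x y : vertex) : code x = code y -> x = y.
Proof.
case: x y => [[i p] kp] [[i' p'] kp'] /= [Ei Ep].
have Ei' : i = i' by apply: val_inj.
subst i'; have Ep' : p = p' by apply: val_inj.
by subst p'; apply: val_inj.
Qed.

Lemma vertex_of_code i p : i < m -> p < n i -> (i == 0) || (p != 0) ->
  exists x : vertex, code x = (i, p).
Proof.
move=> im pn kp.
by exists (exist _ (existT (fun i : 'I_m => 'I_(n i)) (Ordinal im) (Ordinal pn)) kp).
Qed.

Lemma name_self i p : (i == 0) || (p != 0) -> chain_name n i p = (i, p).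
Proof. by rewrite /chain_name; case: i => [|i] //= /negbTE ->. Qed.

(* A name (k, j) denotes (i, p) only as itself, except the entry vertex (k, 0)
   of cycle k, which is the antipode (k - 1, half (k - 1)) of the previous cycle. *)
Lemma name_unique k j i p : chain_name n k j = (i, p) ->
  (p != half i) || (k <= i) -> k = i /\ j = p.
Proof.
rewrite /chain_name; case: ifP => [/andP[k0 _] [<- <-] | _ [-> ->]] //.
by rewrite eqxx /=; lia.
Qed.

Hypothesis n_even : forall i, i < m -> 4 <= n i /\ ~~ odd (n i).

Lemma half_spec i : i < m -> n i = (half i).*2 /\ 2 <= half i.
Proof.
move=> im; have [n4 ev] := n_even im; have := odd_double_half (n i).
by rewrite (negbTE ev) add0n => nE; split; [rewrite nE | lia].
Qed.

Lemma vertex_of_name k j : k < m -> j < n k -> exists x : vertex, code x = chain_name n k j.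
Proof.
move=> km jn; rewrite /chain_name; case: ifP => [/andP[k0 _] | entry].
  have km' : k.-1 < m by lia.
  have [_ h2] := half_spec km'.
  by apply: vertex_of_code => //; lia.
by apply: vertex_of_code => //; move: entry; case: k {km jn} => [|k] //= ->.
Qed.

Lemma chain_edge_names (x y : vertex) : edge x y ->
  exists k j, [/\ k < m, j < n k &
   (chain_name n k j = code x /\ chain_name n k (cnext (n k) j) = code y) \/
   (chain_name n k j = code y /\ chain_name n k (cnext (n k) j) = code x)].
Proof.
case/existsP=> i /existsP[j /orP[] /andP[/eqP h1 /eqP h2]]; exists i, j;
  rewrite (cnext_mod (ltn_ord j)) in h2; split => //; by [left | right].
Qed.

Lemma chain_edge_of_names (x y : vertex) k j : k < m -> j < n k ->
  chain_name n k j = code x -> chain_name n k (cnext (n k) j) = code y -> edge x y.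
Proof.
move=> km jn h1 h2; apply/existsP; exists (Ordinal km); apply/existsP; exists (Ordinal jn).
by rewrite /= cnext_mod // h1 h2 !eqxx.
Qed.

Lemma chain_edge_sym (x y : vertex) : edge x y -> edge y x.
Proof.
case/existsP=> i /existsP[j h]; apply/existsP; exists i; apply/existsP; exists j.
by rewrite orbC.
Qed.

Lemma chain_edge_of_names_prev (x y : vertex) k j : k < m -> j < n k ->
  chain_name n k j = code x -> chain_name n k (cprev (n k) j) = code y -> edge x y.
Proof.
move=> km jn hx hy; apply/chain_edge_sym/(chain_edge_of_names km (cprev_lt jn) hy).
by rewrite cprevK.
Qed.

(* Cycle k is entered at position 0 and left at position half k; a vertex of
   cycle c.1 is seen from cycle k at the position where it is reached. *)
Definition proj_on (k : nat) (c : nat * nat) : nat :=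
  if c.1 < k then 0 else if c.1 == k then c.2 else half k.

Definition chain_dist (x y : vertex) : nat :=
  \sum_(k < m) cycle_dist (n k) (proj_on k (code x)) (proj_on k (code y)).

Lemma proj_on_name l k q :
  proj_on l (chain_name n k q) = if l < k then half l else if l == k then q else 0.
Proof.
rewrite /chain_name; case: ifP => [/andP[k0 /eqP ->] | _]; rewrite /proj_on /=; last first.
  by case: (ltngtP k l).
case: (ltngtP k.-1 l) => lk.
- by case: ifP => [|_]; [lia | case: ifP].
- by have -> : l < k by lia.
- by rewrite -lk; have -> : k.-1 < k by lia.
Qed.

Lemma proj_on_lt (x : vertex) k : k < m -> proj_on k (code x) < n k.
Proof.
move=> km; have [x1 x2 _] := code_bound x; have [nE h2] := half_spec km.
by rewrite /proj_on; case: ifP => _; [lia | case: ifP => [/eqP <- // | _]; lia].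
Qed.

Lemma chain_dist_sym (x y : vertex) : chain_dist x y = chain_dist y x.
Proof. by apply: eq_bigr => k _; rewrite cycle_dist_sym. Qed.

Lemma chain_dist_refl (x : vertex) : chain_dist x x = 0.
Proof. by apply: big1 => k _; rewrite /cycle_dist subnn min0n. Qed.

Lemma chain_dist_move (y x x' : vertex) k j j' : k < m ->
  code x = chain_name n k j -> code x' = chain_name n k j' ->
  chain_dist y x + cycle_dist (n k) (proj_on k (code y)) j' =
  chain_dist y x' + cycle_dist (n k) (proj_on k (code y)) j.
Proof.
move=> km hx hx'; rewrite /chain_dist.
have := @sum_swap_term _
  (fun l : 'I_m => cycle_dist (n l) (proj_on l (code y)) (proj_on l (code x)))
  (fun l : 'I_m => cycle_dist (n l) (proj_on l (code y)) (proj_on l (code x')))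
  (Ordinal km).
rewrite /= hx hx' !proj_on_name ltnn eqxx; apply=> l lk.
have /negbTE lk' : val l != k by apply: contra_neq lk => lk; apply: val_inj.
by rewrite !proj_on_name lk'.
Qed.

Lemma step_in_cycle (x : vertex) k j j' : k < m -> j < n k ->
  chain_name n k j = code x -> j' = cnext (n k) j \/ j' = cprev (n k) j ->
  exists2 x', edge x x' & forall y,
    chain_dist y x + cycle_dist (n k) (proj_on k (code y)) j' =
    chain_dist y x' + cycle_dist (n k) (proj_on k (code y)) j.
Proof.
move=> km jn hx j'E.
have j'n : j' < n k by case: j'E => ->; [apply: cnext_lt | apply: cprev_lt].
have [x' hx'] := vertex_of_name km j'n; exists x'; last first.
  by move=> y; apply: chain_dist_move km (esym hx) hx'.
case: j'E => j'E; subst j'.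
  exact: chain_edge_of_names km jn hx (esym hx').
exact: chain_edge_of_names_prev km jn hx (esym hx').
Qed.

Lemma chain_dist_edge (x y z : vertex) : edge x y -> chain_dist x z <= (chain_dist y z).+1.
Proof.
rewrite (chain_dist_sym x) (chain_dist_sym y).
case/chain_edge_names=> k [j [km jn [[hx hy] | [hy hx]]]];
  have := chain_dist_move z km (esym hx) (esym hy);
  have := cycle_dist_next (proj_on_lt z km) jn; lia.
Qed.

Lemma name_off_projection (x y : vertex) : x != y ->
  exists k j, [/\ k < m, j < n k, chain_name n k j = code x & j != proj_on k (code y)].
Proof.
move=> nxy; have neq : code x != code y by apply: contra_neq nxy; apply: code_inj.
have [] := code_bound x; have [] := code_bound y.
move: neq; case: (code x) => [i p]; case: (code y) => [i' p'] /= neq i'm p'n yk im pn xk.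
have [pE | pN] := eqVneq p (proj_on i (i', p')); last by exists i, p; rewrite name_self.
move: pE; rewrite /proj_on /=; case: (ltngtP i' i) => ii.
- by move: xk => /[swap] ->; lia.
- move=> ->; have i1m : i.+1 < m by lia.
  have [nE h2] := half_spec i1m.
  exists i.+1, 0; split => //; first by lia.
  by rewrite /proj_on /=; case: ifP => [| _]; [lia | case: ifP; lia].
- by move: neq => /[swap] ->; rewrite ii eqxx.
Qed.

Lemma chain_dist_descent (x y : vertex) : x != y ->
  exists2 x', edge x x' & (chain_dist x' y).+1 = chain_dist x y.
Proof.
move=> /name_off_projection[k [j [km jn hx hj]]].
have t_lt := proj_on_lt y km; have [nE _] := half_spec km.
have pos : 0 < cycle_dist (n k) (proj_on k (code y)) j.
  by rewrite lt0n; apply: contra_neq hj => /(cycle_dist_eq0 t_lt jn).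
have [j' j'E down] := cycle_dist_down nE t_lt jn pos.
have [x' exx' move] := step_in_cycle km jn hx j'E.
by exists x' => //; have := move y; rewrite !(chain_dist_sym _ y); lia.
Qed.

Lemma chain_maximally_distantP (x y : vertex) :
  maximally_distant edge chain_dist x y <->
  forall k j, k < m -> j < n k -> chain_name n k j = code x ->
    cycle_dist (n k) (proj_on k (code y)) j = half k.
Proof.
split=> [mxy k j km jn hx | anti x'].
  have t_lt := proj_on_lt y km; have [nE _] := half_spec km.
  apply/eqP; rewrite eqn_leq cycle_dist_le_half //= leqNgt; apply/negP => lt.
  have [j' j'E up] := cycle_dist_up nE t_lt jn lt.
  have [x' exx' move] := step_in_cycle km jn hx j'E.
  by have := mxy _ exx'; have := move y; lia.
case/chain_edge_names=> k [j [km jn hxx']].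
have t_lt := proj_on_lt y km; have [nE _] := half_spec km.
case: hxx' => [[hx hx'] | [hx' hx]]; have := chain_dist_move y km (esym hx) (esym hx').
  by have := anti k j km jn hx; have := cycle_dist_le_half nE t_lt (cnext_lt jn); lia.
by have := anti k _ km (cnext_lt jn) hx; have := cycle_dist_le_half nE t_lt jn; lia.
Qed.

Fixpoint inner_codes (k : nat) : seq (nat * nat) :=
  if k is k'.+1 then inner_codes k' ++ [seq (k', q) | q <- iota 1 (half k' - 1)] else [::].

Definition resolving_codes : seq (nat * nat) := (0, 0) :: inner_codes m.
Definition resolving_set : {set vertex} := [set x | code x \in resolving_codes].

Lemma mem_inner_codes k c : (c \in inner_codes k) = (c.1 < k) && (0 < c.2 < half c.1).
Proof.
case: c => a b /=; elim: k => [|k IH] //=.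
rewrite mem_cat IH; apply/idP/idP.
  by case/orP=> [/andP[ak ->] | /mapP[q]]; [rewrite ltnW | rewrite mem_iota => qr [-> ->]; lia].
case/andP=> ak hb; rewrite ltnS leq_eqVlt in ak; case/orP: ak => [/eqP ak | ->]; last by rewrite hb.
by apply/orP; right; apply/mapP; exists b; [rewrite mem_iota -ak; lia | rewrite ak].
Qed.

Lemma mem_resolving_codes c :
  (c \in resolving_codes) = (c == (0, 0)) || (c.1 < m) && (0 < c.2 < half c.1).
Proof. by rewrite in_cons mem_inner_codes. Qed.

Lemma uniq_resolving_codes : uniq resolving_codes.
Proof.
rewrite /= mem_inner_codes /= andbF /=; elim: m => //= k IH.
rewrite cat_uniq IH map_inj_uniq ?iota_uniq => [|q1 q2 []] //=; rewrite andbT.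
by apply/hasPn => c /mapP[q _ ->]; rewrite mem_inner_codes /= ltnn.
Qed.

Lemma size_resolving_codes : size resolving_codes = 1 + \sum_(i < m) (half i - 1).
Proof.
rewrite /= add1n; congr _.+1; elim: m => [|k IH]; first by rewrite big_ord0.
by rewrite /= size_cat IH size_map size_iota big_ord_recr.
Qed.

Hypothesis m_pos : 0 < m.

Lemma card_resolving_set : #|resolving_set| = size resolving_codes.
Proof.
rewrite cardE -(size_map (fun x : vertex => code x)).
apply/perm_size/uniq_perm; last 1 first.
- move=> c; apply/mapP/idP => [[x] | hc]; first by rewrite mem_enum inE => hx ->.
  have [x hx] : exists x : vertex, code x = c.
    move: hc; rewrite mem_resolving_codes => /orP[/eqP -> | /andP[c1 /andP[c2 c3]]].
      by have [nE h2] := half_spec m_pos; apply: vertex_of_code => //; lia.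
    have [nE h2] := half_spec c1.
    by case: c c1 c2 c3 nE h2 => a b /= *; apply: vertex_of_code => //; lia.
  by exists x; rewrite // mem_enum inE hx.
- by rewrite map_inj_uniq ?enum_uniq //; apply: code_inj.
- exact: uniq_resolving_codes.
Qed.

Lemma far_vertex_outside (x y : vertex) : x \notin resolving_set ->
  maximally_distant edge chain_dist x y ->
  y \in resolving_set \/ code x = (m.-1, half m.-1).
Proof.
move=> xW /chain_maximally_distantP anti; have yproj := proj_on_lt y.
have [] := code_bound x; have [] := code_bound y.
move: xW anti yproj; rewrite !inE !mem_inner_codes.
case: (code x) => [i p]; case: (code y) => [i' p']; rewrite !xpair_eqE /=.
move=> xW anti yproj i'm p'n yk im pn xk.
have [nE h2] := half_spec im.
have last_cycle : p = half i -> i' <= i -> (i, p) = (m.-1, half m.-1).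
  move=> hp ii'; rewrite hp; case: (ltnP i.+1 m) => im1; last by have -> : i = m.-1 by lia.
  have [nE1 h21] := half_spec im1.
  have := anti i.+1 0 im1 ltac:(lia) ltac:(by rewrite hp).
  by rewrite /proj_on /= ltnS ii' /cycle_dist; lia.
move: (anti i p im pn (name_self xk)).
move/(cycle_dist_antipodal nE (yproj i im) pn); rewrite /proj_on /=.
case: (ltngtP i' i) => ii.
- by case=> [|hp]; [lia | right; apply: last_cycle; lia].
- by lia.
- subst i'; case=> [|hp]; first by lia.
  by have [p'0 | p'0] := posnP p'; [right; apply: last_cycle | left]; lia.
Qed.

Lemma resolving_set_strong : strong_resolving_set edge resolving_set.
Proof.
apply: (strong_resolving_of_mmd (d := chain_dist)).
- exact: chain_dist_refl.
- exact: chain_dist_edge.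
- exact: chain_dist_descent.
- exact: chain_edge_sym.
- exact: chain_dist_sym.
move=> a b nab mab mba; apply: contraT; rewrite negb_or => /andP[aW bW].
have [|ea] := far_vertex_outside aW mab; first by rewrite (negbTE bW).
have [|eb] := far_vertex_outside bW mba; first by rewrite (negbTE aW).
by move: nab; rewrite (code_inj (etrans ea (esym eb))) eqxx.
Qed.

(* The partner of a resolving code: v^1_1 is paired with the exit vertex of the
   last cycle, an inner vertex with its antipode in the same cycle. *)
Definition antipode_code (c : nat * nat) : nat * nat :=
  if c.2 == 0 then (m.-1, half m.-1) else (c.1, c.2 + half c.1).

Lemma antipode_codes_disjoint c1 c2 z :
  c1 \in resolving_codes -> c2 \in resolving_codes ->
  (z == c1) || (z == antipode_code c1) -> (z == c2) || (z == antipode_code c2) -> c1 = c2.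
Proof.
case: c1 c2 z => [a1 b1] [a2 b2] [z1 z2].
rewrite !mem_resolving_codes /antipode_code /= !xpair_eqE => h1 h2.
case: (eqVneq b1 0) => b1E; case: (eqVneq b2 0) => b2E; rewrite !xpair_eqE;
  move=> /orP[] /andP[/eqP z1E /eqP z2E] /orP[] /andP[/eqP z1E' /eqP z2E'];
  subst; try lia; congr (_, _); lia.
Qed.

Lemma maximally_distant_single_name (x y : vertex) i p : code x = (i, p) ->
  (p != half i) || (i == m.-1) -> cycle_dist (n i) (proj_on i (code y)) p = half i ->
  maximally_distant edge chain_dist x y.
Proof.
move=> hx single anti; apply/chain_maximally_distantP => k j km jn.
by rewrite hx => /name_unique[|-> ->] //; lia.
Qed.

Lemma antipodal_pair c : c \in resolving_codes -> exists xa xb : vertex,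
  [/\ code xa = c, code xb = antipode_code c, xa != xb,
      maximally_distant edge chain_dist xa xb & maximally_distant edge chain_dist xb xa].
Proof.
rewrite mem_resolving_codes => /orP[/eqP -> | ].
  have m1 : m.-1 < m by lia.
  have [nE0 h0] := half_spec m_pos; have [nE1 h1] := half_spec m1.
  have [xa ha] := @vertex_of_code 0 0 m_pos ltac:(lia) erefl.
  have [xb hb] := @vertex_of_code m.-1 (half m.-1) m1 ltac:(lia) ltac:(lia).
  exists xa, xb; split => //.
  - by apply/eqP => eab; move: hb; rewrite -eab ha => -[]; lia.
  - apply: (maximally_distant_single_name ha); first by lia.
    rewrite hb /proj_on /= (cycle_dist_of_antipodal nE0) //.
    by case: eqP => [->|]; lia.
  - apply: (maximally_distant_single_name hb); first by rewrite !eqxx orbT.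
    rewrite ha /proj_on /= (cycle_dist_of_antipodal nE1) //.
    by case: ifP => m1pos; [|case: ifP]; lia.
case: c => a b /= /andP[am /andP[b0 bh]]; have [nE h] := half_spec am.
rewrite /antipode_code /= (negbTE (lt0n_neq0 b0)).
have [xa ha] := @vertex_of_code a b am ltac:(lia) ltac:(lia).
have [xb hb] := @vertex_of_code a (b + half a) am ltac:(lia) ltac:(lia).
exists xa, xb; split => //.
- by apply/eqP => eab; move: hb; rewrite -eab ha => -[]; lia.
- apply: (maximally_distant_single_name ha); first by lia.
  by rewrite hb /proj_on /= ltnn eqxx (cycle_dist_of_antipodal nE) //; lia.
- apply: (maximally_distant_single_name hb); first by lia.
  by rewrite ha /proj_on /= ltnn eqxx (cycle_dist_of_antipodal nE) //; lia.
Qed.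

(* Lower bound: a strong resolving set contains an end of each of these disjoint pairs. *)
Lemma strong_resolving_card_ge (W : {set vertex}) :
  strong_resolving_set edge W -> size resolving_codes <= #|W|.
Proof.
move=> HW; apply: (@card_ge_of_disjoint_hits _ _ _ _
  (fun c w => (code w == c) || (code w == antipode_code c))).
- exact: uniq_resolving_codes.
- move=> c cs; have [xa [xb [ha hb nab mab mba]]] := antipodal_pair cs.
  have [w wW res] := HW xa xb nab.
  have [] := mmd_resolvers chain_dist_refl chain_dist_edge chain_dist_descent mab mba res;
    by move=> wE; exists w; rewrite // wE ?ha ?hb eqxx ?orbT.
- by move=> c1 c2 h1 h2 w; apply: antipode_codes_disjoint.
Qed.

End EvenChainCycle.

(* Theorem 3.5: the resolving set is strong resolving and no strong resolving set
   is smaller; its size 1 + sum (n_i/2 - 1) is the stated formula.  (The argument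
   only uses m >= 1.) *)
Theorem theorem3p5 (m : nat) (n : nat -> nat) :
  2 <= m ->
  (forall i, i < m -> 4 <= n i /\ ~~ odd (n i)) ->
  is_sdim (@chain_edge m n) (1 + \sum_(i < m) (n i - 2) %/ 2).
Proof.
move=> m2 n_even; have m_pos : 0 < m by lia.
have -> : 1 + \sum_(i < m) (n i - 2) %/ 2 = size (resolving_codes m n).
  rewrite size_resolving_codes; congr (_ + _); apply: eq_bigr => i _.
  by have [nE _] := half_spec n_even (ltn_ord i); lia.
split; last by move=> W; apply: strong_resolving_card_ge.
exists (resolving_set m n); split; first exact: resolving_set_strong.
exact: card_resolving_set.
Qed.
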